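(* Let $C$ be a Pauli-Square-Root Clifford and $P$ a Pauli, both acting on the same $t$ qubits. Then there is a $t$-qubit Pauli $Q$ such that $$C(P)\,(I\otimes C)=C(Q)\,(I\otimes C)\,C(P),$$ where the first tensor factor is a single control qubit; moreover $Q$ either commutes or anticommutes with $C$, and $\mathrm{Supp}(Q)\subseteq\mathrm{Supp}(C)$.
   Context: Paulis are tensor products of $I,X,Y,Z$ times a phase in $\{\pm1,\pm i\}$; a Clifford is a unitary mapping Paulis to Paulis under conjugation. A Pauli-Square-Root Clifford (PSC) is a Clifford that is not a Pauli and whose square is a Pauli. For a unitary $U$ on $t$ qubits, $C(U)=|0\rangle\langle0|\otimes I+|1\rangle\langle1|\otimes U$ on $1+t$ qubits (control first). $\mathrm{Supp}(W)$ denotes the set of qubits on which an operator $W$ acts nontrivially. *)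

From HB Require Import structures.
From mathcomp Require Import all_boot all_order all_algebra.
Set Implicit Arguments. Unset Strict Implicit. Unset Printing Implicit Defensive.
Import Order.TTheory GRing.Theory Num.Theory.
Local Open Scope ring_scope.

Section Qubits.
Variable K : numClosedFieldType.

(* t-qubit operators: matrices indexed by basis states 'I_(2^t);
   qubit k of basis state x is the k-th binary digit of x. *)
Definition bit (t : nat) (k : 'I_t) (x : 'I_(2 ^ t)) : bool := odd (x %/ 2 ^ k).

Definition clearbit (t : nat) (k : 'I_t) (x : 'I_(2 ^ t)) : 'I_(2 ^ t) :=
  insubd x (val x - (bit k x : nat) * 2 ^ k)%N.

(* single-qubit Paulis: 0 = I, 1 = X, 2 = Y, 3 = Z ; entries <a|sigma|b> *)
Definition sigma (j : 'I_4) (a b : bool) : K :=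
  match val j with
  | 0 => (a == b)%:R
  | 1 => (a != b)%:R
  | 2 => if a == b then 0 else if b then - 'i else 'i
  | _ => if a == b then (if a then -1 else 1) else 0
  end.

Definition pauli_string (t : nat) (p : 'I_t -> 'I_4) : 'M[K]_(2 ^ t) :=
  \matrix_(x, y) \prod_(k < t) sigma (p k) (bit k x) (bit k y).

Definition is_pauli (t : nat) (W : 'M[K]_(2 ^ t)) : Prop :=
  exists (c : K) (p : 'I_t -> 'I_4),
    [\/ c = 1, c = -1, c = 'i | c = - 'i] /\ W = c *: pauli_string p.

Definition adjoint (n : nat) (A : 'M[K]_n) : 'M[K]_n := (map_mx Num.conj A)^T.

Definition unitary (n : nat) (U : 'M[K]_n) : Prop :=
  U *m adjoint U = 1%:M /\ adjoint U *m U = 1%:M.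

Definition is_clifford (t : nat) (U : 'M[K]_(2 ^ t)) : Prop :=
  unitary U /\ forall P, is_pauli P -> is_pauli (U *m P *m adjoint U).

Definition is_PSC (t : nat) (C : 'M[K]_(2 ^ t)) : Prop :=
  is_clifford C /\ ~ is_pauli C /\ is_pauli (C *m C).

(* W acts trivially on qubit k : W = I_k (x) A for an operator A on the
   other qubits (A's entries indexed with qubit k cleared) *)
Definition acts_trivially_on (t : nat) (W : 'M[K]_(2 ^ t)) (k : 'I_t) : Prop :=
  exists A : 'M[K]_(2 ^ t), forall x y,
    W x y = (bit k x == bit k y)%:R * A (clearbit k x) (clearbit k y).

Definition in_supp (t : nat) (W : 'M[K]_(2 ^ t)) (k : 'I_t) : Prop :=
  ~ acts_trivially_on W k.

(* controlled-U, control qubit first (most significant): |0><0|(x)I + |1><1|(x)U *)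
Definition ctrl (t : nat) (U : 'M[K]_(2 ^ t)) : 'M[K]_(2 ^ t + 2 ^ t) :=
  block_mx 1%:M 0 0 U.

Definition idtens (t : nat) (U : 'M[K]_(2 ^ t)) : 'M[K]_(2 ^ t + 2 ^ t) :=
  block_mx U 0 0 U.

End Qubits.

From HB Require Import structures.
From mathcomp Require Import all_boot all_order all_algebra.
From mathcomp Require Import ring.
Import GRing.Theory Num.Theory.
Local Open Scope ring_scope.
Set Implicit Arguments. Unset Strict Implicit.

(* Take Q := P C P^dagger C^dagger, the group commutator of P and C.  Then
   Q C P = P C, which is the controlled-gate identity blockwise, and Q is a
   Pauli because the Clifford C maps P^dagger to a Pauli.  With D := C P C^dagger,
   both Q C and C Q equal +-D P^dagger C: the first because Q is the adjoint of
   the Pauli D P^dagger, the second because the Pauli C^2 commutes with P^dagger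
   up to sign.  Finally, W acts trivially on qubit k iff W commutes with X_k and
   Z_k; if C commutes with a Pauli G then so does Q, because the signs picked up
   by moving G past P and past P^dagger cancel. *)

Lemma eq_from_bits_nat (t x y : nat) : (x < 2 ^ t)%N -> (y < 2 ^ t)%N ->
  (forall k, (k < t)%N -> odd (x %/ 2 ^ k) = odd (y %/ 2 ^ k)) -> x = y.
Proof.
elim: t x y => [|t IH] x y; first by rewrite expn0 !ltnS !leqn0 => /eqP-> /eqP->.
move=> ltx lty eq_bits.
have half_eq : (x %/ 2 = y %/ 2)%N.
  apply: IH; rewrite ?ltn_divLR -?expnSr // => k ltkt.
  by have := eq_bits k.+1 ltkt; rewrite expnS !divnMA.
have := eq_bits 0%N isT; rewrite expn0 !divn1 => odd_eq.
by rewrite (divn_eq x 2) (divn_eq y 2) half_eq !modn2 odd_eq.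
Qed.

Lemma odd_divn_exp2_split (k j a c : nat) : (a < 2 ^ k)%N ->
  odd ((c * 2 ^ k + a) %/ 2 ^ j)
  = if (j < k)%N then odd (a %/ 2 ^ j) else odd (c %/ 2 ^ (j - k)).
Proof.
move=> lta; case: ltnP => [ltjk|lekj].
  have e : (2 ^ k = 2 ^ (k - j) * 2 ^ j)%N by rewrite -expnD subnK // ltnW.
  rewrite divnDl; last by rewrite e mulnA dvdn_mull.
  rewrite oddD {1}e mulnA mulnK ?expn_gt0 // oddM oddX.
  by rewrite subn_eq0 leqNgt ltjk andbF.
have e : (2 ^ j = 2 ^ k * 2 ^ (j - k))%N by rewrite -expnD subnKC.
by rewrite e divnMA divnMDl ?expn_gt0 // (divn_small lta) addn0.
Qed.

Lemma odd_divn_exp2_subn (x k j : nat) : odd (x %/ 2 ^ k) ->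
  odd ((x - 2 ^ k) %/ 2 ^ j) = odd (x %/ 2 ^ j) && (j != k).
Proof.
move=> odd_xk.
have [c [a [lta even_c ->]]] :
    exists c a, [/\ (a < 2 ^ k)%N, ~~ odd c & x = c.+1 * 2 ^ k + a]%N.
  case def_q: (x %/ 2 ^ k)%N odd_xk => [//|c] odd_c.
  by exists c, (x %% 2 ^ k)%N; rewrite ltn_mod expn_gt0 -def_q -divn_eq.
have -> : (c.+1 * 2 ^ k + a - 2 ^ k = c * 2 ^ k + a)%N by rewrite mulSn -addnA addKn.
rewrite !odd_divn_exp2_split //.
case: (ltngtP j k) => [_|ltkj|->] /=; rewrite ?andbT ?andbF //.
  by rewrite -(subnSK ltkj) expnS !divnMA !divn2 /= uphalf_half (negPf even_c).
by rewrite subnn divn1 (negPf even_c).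
Qed.

Section Bits.
Variable t : nat.

Lemma eq_from_bits (x y : 'I_(2 ^ t)) : (forall k, bit k x = bit k y) -> x = y.
Proof.
move=> eq_bits; apply/val_inj/(eq_from_bits_nat (ltn_ord x) (ltn_ord y)).
by move=> k ltkt; apply: (eq_bits (Ordinal ltkt)).
Qed.

Definition bits (x : 'I_(2 ^ t)) : {ffun 'I_t -> bool} := [ffun k => bit k x].

Lemma bits_bij : bijective bits.
Proof.
apply: inj_card_bij; last by rewrite card_ffun card_bool !card_ord.
by move=> x y /ffunP eq_bits; apply: eq_from_bits => k; have := eq_bits k; rewrite !ffunE.
Qed.

Definition of_bits (f : {ffun 'I_t -> bool}) : 'I_(2 ^ t) :=
  odflt (Ordinal (expn_gt0 2 t)) [pick x | bits x == f].

Lemma bit_of_bits f k : bit k (of_bits f) = f k.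
Proof.
rewrite /of_bits; case: pickP => [x /eqP <-|no_preimage]; first by rewrite ffunE.
have [g _ gK] := bits_bij.
by have := no_preimage (g f); rewrite gK eqxx.
Qed.

Lemma bit_clearbit (k j : 'I_t) (x : 'I_(2 ^ t)) :
  bit j (clearbit k x) = bit j x && (j != k).
Proof.
rewrite /clearbit /bit val_insubd; case bitk: (odd (x %/ 2 ^ k)) => /=.
  by rewrite mul1n (leq_ltn_trans (leq_subr _ _) (ltn_ord x)) odd_divn_exp2_subn.
by rewrite mul0n subn0 ltn_ord; case: eqVneq => [->|]; rewrite ?bitk ?andbT ?andbF.
Qed.

Variable K : numClosedFieldType.

Lemma sum_prod_bits (F : 'I_t -> bool -> K) :
  \sum_(x : 'I_(2 ^ t)) \prod_k F k (bit k x) = \prod_k \sum_(b : bool) F k b.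
Proof.
rewrite bigA_distr_bigA (reindex bits) /=; last first.
  by have [g xK gK] := bits_bij; exists g => x _; [apply: xK|apply: gK].
by apply: eq_bigr => x _; apply: eq_bigr => k _; rewrite ffunE.
Qed.

Lemma prod_eq_bits (x y : 'I_(2 ^ t)) :
  \prod_k ((bit k x == bit k y)%:R : K) = (x == y)%:R.
Proof.
case: eqVneq => [<-|neq_xy]; first by rewrite big1 // => k _; rewrite eqxx.
have [k neq_k] : exists k, bit k x != bit k y.
  apply/existsP; rewrite -negb_forall; apply: contra neq_xy => /forallP eq_bits.
  by apply/eqP/eq_from_bits => k; apply/eqP.
by rewrite (bigD1 k) //= (negPf neq_k) mul0r.
Qed.

End Bits.

Definition pauli_mul_index (a c : 'I_4) : 'I_4 :=
  inord (match val a, val c with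
         | 0, c => c | a, 0 => a
         | 1, 2 => 3 | 1, 3 => 2 | 2, 1 => 3 | 2, 3 => 1 | 3, 1 => 2 | 3, 2 => 1
         | _, _ => 0 end).

Lemma pauli_mul_indexC (a c : 'I_4) : pauli_mul_index a c = pauli_mul_index c a.
Proof. by case: a => [[|[|[|[|a]]]] ?]; case: c => [[|[|[|[|c]]]] ?]. Qed.

Lemma pauli_mul_indexxx (a : 'I_4) : pauli_mul_index a a = 0.
Proof. by apply: val_inj; case: a => [[|[|[|[|a]]]] ?]; rewrite /= ?inordK. Qed.

Section SingleQubit.
Variable K : numClosedFieldType.

Definition pauli_mul_phase (a c : 'I_4) : K :=
  match val a, val c with
  | 1, 2 | 2, 3 | 3, 1 => 'i
  | 2, 1 | 3, 2 | 1, 3 => - 'i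
  | _, _ => 1 end.

Definition is_phase (c : K) : Prop := [\/ c = 1, c = -1, c = 'i | c = - 'i].
Definition is_sign (s : K) : Prop := s = 1 \/ s = -1.

Lemma mulCii : 'i * 'i = -1 :> K.
Proof. by rewrite -expr2 sqrCi. Qed.

Lemma sigma_mul (a c : 'I_4) u v :
  \sum_(b : bool) sigma K a u b * sigma K c b v
  = pauli_mul_phase a c * sigma K (pauli_mul_index a c) u v.
Proof.
rewrite big_bool; case: a => [[|[|[|[|a]]]] ?] //; case: c => [[|[|[|[|c]]]] ?] //;
by rewrite /sigma /pauli_mul_index /= inordK //; case: u; case: v;
  rewrite /= ?(mulr0, mul0r, mulr1, mul1r, addr0, add0r, mulrN, mulNr, opprK, mulCii).
Qed.

Lemma sigma_conj (a : 'I_4) u v : (sigma K a u v)^* = sigma K a v u.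
Proof.
by case: a => [[|[|[|[|a]]]] ?]; case: u; case: v;
  rewrite /sigma /= ?(rmorph0, rmorph1, rmorphN) /= ?(conjCi, opprK).
Qed.

Lemma pauli_mul_phasexx (a : 'I_4) : pauli_mul_phase a a = 1.
Proof. by case: a => [[|[|[|[|a]]]] ?]. Qed.

Lemma pauli_mul_phaseC (a c : 'I_4) :
  exists2 s, is_sign s & pauli_mul_phase a c = s * pauli_mul_phase c a.
Proof.
case: a => [[|[|[|[|a]]]] ?] //; case: c => [[|[|[|[|c]]]] ?] //=;
first [by exists 1; [left|rewrite mul1r] | by exists (-1); [right|rewrite mulN1r ?opprK]].
Qed.

Lemma is_phaseM c d : is_phase c -> is_phase d -> is_phase (c * d).
Proof.
case=> ->; case=> ->; rewrite /is_phase ?(mulr1, mul1r, mulrN, mulNr, opprK, mulCii);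
  auto using Or41, Or42, Or43, Or44.
Qed.

Lemma is_phase_prod I (r : seq I) (P : pred I) (F : I -> K) :
  (forall i, is_phase (F i)) -> is_phase (\prod_(i <- r | P i) F i).
Proof. by move=> phaseF; apply: big_ind => //; [apply: Or41 | apply: is_phaseM]. Qed.

Lemma is_phase_pauli_mul_phase (a c : 'I_4) : is_phase (pauli_mul_phase a c).
Proof.
case: a => [[|[|[|[|a]]]] ?]; case: c => [[|[|[|[|c]]]] ?];
  rewrite /is_phase; auto using Or41, Or42, Or43, Or44.
Qed.

Lemma is_phase_conj c : is_phase c -> is_phase c^*.
Proof.
case=> ->; rewrite /is_phase ?(rmorph1, rmorphN) /= ?(conjCi, opprK);
  auto using Or41, Or42, Or43, Or44.
Qed.

Lemma is_phase_conjM c : is_phase c -> c^* * c = 1.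
Proof.
by case=> ->; rewrite ?(rmorph1, rmorphN) /=
  ?(conjCi, opprK, mulr1, mulN1r, mulNr, mulrN, mulCii).
Qed.

Lemma is_phase_conj_sign c : is_phase c -> exists2 s, is_sign s & c^* = s * c.
Proof.
case=> ->; rewrite ?(rmorph1, rmorphN) /= ?conjCi.
- by exists 1; [left | rewrite mul1r].
- by exists 1; [left | rewrite mul1r].
- by exists (-1); [right | rewrite mulN1r].
- by exists (-1); [right | rewrite mulN1r].
Qed.

Lemma is_signM s u : is_sign s -> is_sign u -> is_sign (s * u).
Proof. by case=> ->; case=> ->; rewrite /is_sign ?(mulr1, mul1r, mulN1r, opprK); auto. Qed.

Lemma is_sign_mulss s : is_sign s -> s * s = 1.
Proof. by case=> ->; rewrite ?(mulr1, mulN1r, opprK). Qed.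

Lemma sign_prod I (r : seq I) (F G : I -> K) :
  (forall i, exists2 s, is_sign s & F i = s * G i) ->
  exists2 s, is_sign s & \prod_(i <- r) F i = s * \prod_(i <- r) G i.
Proof.
move=> signFG; elim/big_rec2: _ => [|i y z _ [s sign_s ->]].
  by exists 1; [left | rewrite mul1r].
have [u sign_u ->] := signFG i; exists (u * s); first exact: is_signM.
by rewrite mulrACA.
Qed.

End SingleQubit.

Section Adjoint.
Variables (K : numClosedFieldType) (n : nat).
Implicit Types A B : 'M[K]_n.

Lemma adjointM A B : adjoint (A *m B) = adjoint B *m adjoint A.
Proof. by rewrite /adjoint map_mxM trmx_mul. Qed.

Lemma adjointK : involutive (@adjoint K n).
Proof. by move=> A; apply/matrixP => i j; rewrite !mxE conjCK. Qed.

Lemma adjointZ c A : adjoint (c *: A) = c^* *: adjoint A.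
Proof. by apply/matrixP => i j; rewrite !mxE rmorphM. Qed.

End Adjoint.

Section PauliString.
Variables (K : numClosedFieldType) (t : nat).
Implicit Types p q : 'I_t -> 'I_4.
Local Notation ps := (@pauli_string K t).

Lemma eq_pauli_string p q : p =1 q -> ps p = ps q.
Proof.
move=> eq_pq; apply/matrixP => x y; rewrite /pauli_string !mxE.
by apply: eq_bigr => k _; rewrite eq_pq.
Qed.

Lemma pauli_string_mul p q :
  ps p *m ps q
  = (\prod_k pauli_mul_phase K (p k) (q k)) *: ps (fun k => pauli_mul_index (p k) (q k)).
Proof.
apply/matrixP => x y; rewrite /pauli_string !mxE -big_split /=.
rewrite [RHS](eq_bigr _ (fun k _ => esym (sigma_mul _ _ _ _ _))) -sum_prod_bits.
by apply: eq_bigr => z _; rewrite !mxE -big_split.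
Qed.

Lemma pauli_string_id : ps (fun _ => 0) = 1%:M.
Proof. by apply/matrixP => x y; rewrite /pauli_string !mxE prod_eq_bits. Qed.

Lemma adjoint_pauli_string p : adjoint (ps p) = ps p.
Proof.
apply/matrixP => x y; rewrite /pauli_string !mxE rmorph_prod /=.
by apply: eq_bigr => k _; rewrite sigma_conj.
Qed.

End PauliString.

Section PauliGroup.
Variables (K : numClosedFieldType) (t : nat).
Implicit Types A B : 'M[K]_(2 ^ t).

Lemma pauli_mul A B : is_pauli A -> is_pauli B -> is_pauli (A *m B).
Proof.
case=> c [p [phase_c ->]] [d [q [phase_d ->]]].
exists (c * d * \prod_k pauli_mul_phase K (p k) (q k)).
exists (fun k => pauli_mul_index (p k) (q k)); split.
  by do 2?apply: is_phaseM => //; apply: is_phase_prod => k; apply: is_phase_pauli_mul_phase.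
by rewrite -scalemxAl -scalemxAr pauli_string_mul !scalerA.
Qed.

Lemma pauli_adjoint A : is_pauli A -> is_pauli (adjoint A).
Proof.
case=> c [p [phase_c ->]]; exists c^*, p.
by rewrite adjointZ adjoint_pauli_string; split=> //; apply: is_phase_conj.
Qed.

Lemma pauli_adjoint_sign A : is_pauli A -> exists2 s, is_sign s & adjoint A = s *: A.
Proof.
case=> c [p [phase_c ->]]; have [s sign_s conj_c] := is_phase_conj_sign phase_c.
by exists s; rewrite // adjointZ adjoint_pauli_string conj_c scalerA.
Qed.

Lemma pauli_unitary A : is_pauli A -> unitary A.
Proof.
case=> c [p [phase_c ->]].
have sqr_p : pauli_string K p *m pauli_string K p = 1%:M.
  rewrite pauli_string_mul big1 => [|k _]; last exact: pauli_mul_phasexx.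
  rewrite scale1r -pauli_string_id; apply: eq_pauli_string => k.
  exact: pauli_mul_indexxx.
have conjMc : c^* * c = 1 := is_phase_conjM phase_c.
rewrite /unitary adjointZ adjoint_pauli_string -!scalemxAl -!scalemxAr !scalerA sqr_p.
by rewrite [c * _]mulrC conjMc scale1r.
Qed.

Lemma pauli_commute_sign A B : is_pauli A -> is_pauli B ->
  exists2 s, is_sign s & A *m B = s *: (B *m A).
Proof.
case=> c [p [_ ->]] [d [q [_ ->]]].
have [s sign_s phase_pq] :=
  sign_prod (index_enum 'I_t) (fun k => pauli_mul_phaseC K (p k) (q k)).
exists s => //; rewrite -!scalemxAl -!scalemxAr !pauli_string_mul !scalerA phase_pq.
rewrite (eq_pauli_string K (fun k => pauli_mul_indexC (q k) (p k))).
by congr (_ *: _); ring.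
Qed.

End PauliGroup.

Section QubitCommutant.
Variables (K : numClosedFieldType) (t : nat) (k : 'I_t).
Implicit Types (W : 'M[K]_(2 ^ t)) (x y : 'I_(2 ^ t)).

Definition flipbit x : 'I_(2 ^ t) := of_bits [ffun j => bit j x (+) (j == k)].

Lemma bit_flipbit j x : bit j (flipbit x) = bit j x (+) (j == k).
Proof. by rewrite bit_of_bits ffunE. Qed.

Lemma flipbitK : involutive flipbit.
Proof. by move=> x; apply: eq_from_bits => j; rewrite !bit_flipbit addbK. Qed.

Lemma clearbit_flipbit x : clearbit k (flipbit x) = clearbit k x.
Proof.
apply: eq_from_bits => j; rewrite !bit_clearbit bit_flipbit.
by case: (eqVneq j k) => _ /=; rewrite ?andbF ?addbF.
Qed.

Lemma clearbitE x : clearbit k x = if bit k x then flipbit x else x.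
Proof.
apply: eq_from_bits => j; rewrite bit_clearbit fun_if bit_flipbit.
by case: eqVneq => [->|]; case: (bit k x); rewrite ?addbT ?addbF ?andbT ?andbF.
Qed.

Definition pauli_at (a : 'I_4) : 'I_t -> 'I_4 := fun j => if j == k then a else 0.
Definition pauliX : 'M[K]_(2 ^ t) := pauli_string K (pauli_at (@Ordinal 4 1 isT)).
Definition pauliZ : 'M[K]_(2 ^ t) := pauli_string K (pauli_at (@Ordinal 4 3 isT)).

Lemma pauli_string_at a : is_pauli (pauli_string K (pauli_at a)).
Proof. by exists 1, (pauli_at a); rewrite scale1r; split=> //; apply: Or41. Qed.

Lemma pauliXE x y : pauliX x y = (flipbit x == y)%:R.
Proof.
rewrite /pauliX /pauli_string mxE -prod_eq_bits; apply: eq_bigr => j _.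
rewrite bit_flipbit /pauli_at; case: eqVneq => _; rewrite /sigma /= ?addbT ?addbF //.
by case: (bit j x); case: (bit j y).
Qed.

Lemma pauliZE x y : pauliZ x y = (x == y)%:R * (-1) ^+ bit k x.
Proof.
rewrite /pauliZ /pauli_string mxE -prod_eq_bits (bigD1 k) //= [in RHS](bigD1 k) //=.
rewrite mulrAC; congr (_ * _); last first.
  by apply: eq_bigr => j /negPf neq_jk; rewrite /pauli_at neq_jk.
rewrite /pauli_at eqxx /sigma /=.
by case: (bit k x); case: (bit k y); rewrite /= ?mul0r ?mul1r.
Qed.

Lemma mulmxXE W x y : (W *m pauliX) x y = W x (flipbit y).
Proof.
rewrite mxE (bigD1 (flipbit y)) //= pauliXE flipbitK eqxx mulr1 big1 ?addr0 // => z neq_z.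
rewrite pauliXE; case: eqP => [flip_z|_]; last by rewrite mulr0.
by rewrite -flip_z flipbitK eqxx in neq_z.
Qed.

Lemma mulXmxE W x y : (pauliX *m W) x y = W (flipbit x) y.
Proof.
rewrite mxE (bigD1 (flipbit x)) //= pauliXE eqxx mul1r big1 ?addr0 // => z neq_z.
by rewrite pauliXE eq_sym (negPf neq_z) mul0r.
Qed.

Lemma mulmxZE W x y : (W *m pauliZ) x y = W x y * (-1) ^+ bit k y.
Proof.
rewrite mxE (bigD1 y) //= pauliZE eqxx mul1r big1 ?addr0 // => z neq_z.
by rewrite pauliZE (negPf neq_z) mul0r mulr0.
Qed.

Lemma mulZmxE W x y : (pauliZ *m W) x y = (-1) ^+ bit k x * W x y.
Proof.
rewrite mxE (bigD1 x) //= pauliZE eqxx mul1r big1 ?addr0 // => z neq_z.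
by rewrite pauliZE eq_sym (negPf neq_z) !mul0r.
Qed.

Lemma acts_trivially_onP W :
  acts_trivially_on W k <-> W *m pauliX = pauliX *m W /\ W *m pauliZ = pauliZ *m W.
Proof.
split=> [[A WE]|[commX commZ]].
  split; apply/matrixP => x y.
    rewrite mulmxXE mulXmxE !WE !clearbit_flipbit !bit_flipbit eqxx !addbT.
    by case: (bit k x); case: (bit k y).
  rewrite mulmxZE mulZmxE WE mulrC.
  by case: (bit k x); case: (bit k y); rewrite /= ?mul0r ?mulr0.
(* Commuting with Z_k kills the entries that change qubit k; commuting with
   X_k makes the remaining ones independent of qubit k. *)
exists W => x y.
have flipE : W (flipbit x) (flipbit y) = W x y.
  have := congr1 (fun M : 'M[K]_(2 ^ t) => M x (flipbit y)) commX.
  by rewrite /= mulmxXE mulXmxE flipbitK.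
case: (boolP (bit k x == bit k y)) => [/eqP eq_bits|neq_bits].
  by rewrite mul1r !clearbitE -eq_bits; case: (bit k x); rewrite ?flipE.
rewrite mul0r.
have := congr1 (fun M : 'M[K]_(2 ^ t) => M x y) commZ; rewrite /= mulmxZE mulZmxE.
by move: neq_bits; case: (bit k x); case: (bit k y) => //= _;
  rewrite expr1 expr0 ?mulr1 ?mul1r ?mulrN1 ?mulN1r => /eqP;
  rewrite -?eqr_oppLR eqNr => /eqP.
Qed.

End QubitCommutant.

Section Commutator.
Variables (K : numClosedFieldType) (n : nat).
Implicit Types C G P U X Y : 'M[K]_n.

Definition mxcommutator P C := P *m C *m adjoint P *m adjoint C.

Lemma mxcommutator_mulmx P C : unitary P -> unitary C ->
  mxcommutator P C *m C *m P = P *m C.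
Proof.
move=> [_ uP] [_ uC]; rewrite /mxcommutator -(mulmxA _ (adjoint C)) uC mulmx1.
by rewrite -(mulmxA _ (adjoint P)) uP mulmx1.
Qed.

Lemma mulmx_commute_scale X Y G a b :
  X *m G = a *: (G *m X) -> Y *m G = b *: (G *m Y) ->
  X *m Y *m G = (a * b) *: (G *m (X *m Y)).
Proof.
move=> XG YG; rewrite -mulmxA YG -scalemxAr (mulmxA X) XG -scalemxAl scalerA mulrC.
by rewrite mulmxA.
Qed.

Lemma unitary_adjoint_commute_scale U G s : unitary U -> s * s = 1 ->
  U *m G = s *: (G *m U) -> adjoint U *m G = s *: (G *m adjoint U).
Proof.
move=> [uU Uu] ss1 UG.
have GUa : G *m adjoint U = s *: (adjoint U *m G).
  have := congr1 (fun M => adjoint U *m M *m adjoint U) UG.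
  rewrite /= !mulmxA Uu mul1mx -scalemxAr -scalemxAl !mulmxA.
  by rewrite -(mulmxA _ U) uU mulmx1.
by rewrite GUa scalerA ss1 scale1r.
Qed.

Lemma mxcommutator_commute P C G s : unitary P -> unitary C -> s * s = 1 ->
  P *m G = s *: (G *m P) -> C *m G = G *m C ->
  mxcommutator P C *m G = G *m mxcommutator P C.
Proof.
move=> uP uC ss1 PG CG.
have CG1 : C *m G = 1 *: (G *m C) by rewrite scale1r.
have PaG := unitary_adjoint_commute_scale uP ss1 PG.
have CaG := unitary_adjoint_commute_scale uC (mulr1 1) CG1.
have := mulmx_commute_scale (mulmx_commute_scale (mulmx_commute_scale PG CG1) PaG) CaG.
by rewrite !mulr1 ss1 scale1r.
Qed.

End Commutator.

Section PauliCommutator.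
Variables (K : numClosedFieldType) (t : nat).
Implicit Types C P : 'M[K]_(2 ^ t).

Lemma pauli_mxcommutator P C : is_pauli P -> is_clifford C -> is_pauli (mxcommutator P C).
Proof.
move=> pauliP [_ cliffC]; rewrite /mxcommutator -!mulmxA.
by apply: (pauli_mul pauliP); rewrite !mulmxA; apply: cliffC; apply: pauli_adjoint.
Qed.

Lemma mxcommutator_pauli_commute P C G : is_pauli P -> unitary C -> is_pauli G ->
  C *m G = G *m C -> mxcommutator P C *m G = G *m mxcommutator P C.
Proof.
move=> pauliP uC pauliG; have [s sign_s PG] := pauli_commute_sign pauliP pauliG.
exact: mxcommutator_commute (pauli_unitary pauliP) uC (is_sign_mulss sign_s) PG.
Qed.

Lemma in_supp_mxcommutator P C k : is_pauli P -> unitary C ->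
  in_supp (mxcommutator P C) k -> in_supp C k.
Proof.
move=> pauliP uC suppQ /acts_trivially_onP[CX CZ]; apply/suppQ/acts_trivially_onP.
by split; apply: mxcommutator_pauli_commute => //; apply: pauli_string_at.
Qed.

Lemma mxcommutator_pauli_sign P C : is_pauli P -> is_clifford C -> is_pauli (C *m C) ->
  mxcommutator P C *m C = C *m mxcommutator P C
  \/ mxcommutator P C *m C = - (C *m mxcommutator P C).
Proof.
move=> pauliP [[uC Cu] cliffC] pauliCC; set D := C *m P *m adjoint C.
have pauliPa := pauli_adjoint pauliP.
have [s1 sign1 CCPa] := pauli_commute_sign pauliCC pauliPa.
have [s2 sign2 DPaa] := pauli_adjoint_sign (pauli_mul (cliffC P pauliP) pauliPa).
have QC : mxcommutator P C *m C = s2 *: (D *m adjoint P *m C).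
  by rewrite scalemxAl /D -DPaa !adjointM !adjointK !mulmxA.
have CQ : C *m mxcommutator P C = s1 *: (D *m adjoint P *m C).
  have DC : D *m C = C *m P by rewrite /D -mulmxA Cu mulmx1.
  rewrite /mxcommutator !mulmxA -DC -(mulmxA D C C) -(mulmxA D (C *m C)) CCPa.
  by rewrite -scalemxAr -scalemxAl !mulmxA -(mulmxA _ C (adjoint C)) uC mulmx1.
rewrite QC CQ; case: sign1 => ->; case: sign2 => ->; rewrite ?scale1r ?scaleN1r ?opprK;
  by [left | right].
Qed.

End PauliCommutator.

Lemma ctrl_mul_idtens (K : numClosedFieldType) (t : nat) (A B C P : 'M[K]_(2 ^ t)) :
  A *m C = B *m C *m P -> ctrl A *m idtens C = ctrl B *m idtens C *m ctrl P.
Proof.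
move=> ACE; rewrite /ctrl /idtens !mulmx_block.
by rewrite !(mulmx0, mul0mx, mul1mx, mulmx1, addr0, add0r) ACE.
Qed.

Theorem proposition3 (K : numClosedFieldType) (t : nat)
    (C P : 'M[K]_(2 ^ t)) :
  is_PSC C -> is_pauli P ->
  exists Q : 'M[K]_(2 ^ t),
    [/\ is_pauli Q,
        ctrl P *m idtens C = ctrl Q *m idtens C *m ctrl P,
        (Q *m C = C *m Q \/ Q *m C = - (C *m Q))
      & forall k : 'I_t, in_supp Q k -> in_supp C k].
Proof.
move=> [cliffC [_ pauliCC]] pauliP; exists (mxcommutator P C); split.
- exact: pauli_mxcommutator.
- apply: ctrl_mul_idtens; rewrite mxcommutator_mulmx //; first exact: pauli_unitary.
  by case: cliffC.
- exact: mxcommutator_pauli_sign.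
- by move=> k; apply: in_supp_mxcommutator => //; case: cliffC.
Qed.
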